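(* Let $u,v,w$ be words of length $N$. For an oriented TFPL $f$ with boundary $(u,v;w)$, let $M_o(f)$ be the set of edges of $f$ oriented from an odd vertex to an even vertex, and $M_e(f)$ the set of edges of $f$ oriented from an even vertex to an odd vertex. Then $f\mapsto (M_o(f),M_e(f))$ is a bijection between the set of oriented TFPLs with boundary $(u,v;w)$ and the set of ordered pairs $(M_o,M_e)$ where $M_o$ is a perfect matching of $G^N_o(u,w)$, $M_e$ is a perfect matching of $G^N_e(v,w)$, and $M_o$ and $M_e$ are disjoint as sets of edges of $G^N$.
   Context: Let $N\ge 1$. $G^N$ is the induced subgraph of the square lattice $\mathbb{Z}^2$ formed by $N$ consecutive, horizontally centred rows having $3,5,\dots,2N+1$ vertices from top to bottom. It is bipartite; vertices of the same colour as the leftmost vertex of each row are called odd, the others even. Let $B_1,\dots,B_N$ be the even vertices of the bottom row, $L_1,\dots,L_N$ the leftmost vertices of the rows, and $R_1,\dots,R_N$ the rightmost vertices of the rows, each family numbered from left to right (so $L_1$ is the leftmost vertex of the bottom row and $R_1$ the rightmost vertex of the top row). A TFPL of size $N$ is a subgraph $f$ of $G^N$ (a set of edges) such that each $L_i$ and each $R_i$ has degree $0$ or $1$, each $B_i$ has degree $1$, every other vertex has degree $2$, and no path of $f$ joins two vertices $L_i,L_j$ or two vertices $R_i,R_j$. An oriented TFPL is a TFPL together with an orientation of each of its edges such that every vertex of degree $2$ has one incoming and one outgoing edge, the edges at the $L_i$ are oriented away from $L_i$, and the edges at the $R_i$ are oriented into $R_i$. For words $u,v,w\in\{0,1\}^N$,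 an oriented TFPL has boundary $(u,v;w)$ if for all $i$: $u_i=1$ iff $L_i$ has degree $1$; $v_i=0$ iff $R_i$ has degree $1$; $w_i=1$ if $B_i$ has in-degree $1$ and $w_i=0$ if $B_i$ has out-degree $1$. $G^N_o(u,w)$ is the induced subgraph of $G^N$ obtained by deleting all $R_i$, all $B_i$ with $w_i=0$, and all $L_i$ with $u_i=0$. $G^N_e(v,w)$ is the induced subgraph of $G^N$ obtained by deleting all $L_i$, all $B_i$ with $w_i=1$, and all $R_i$ with $v_i=1$. *)

From mathcomp Require Import all_boot.
Set Implicit Arguments. Unset Strict Implicit. Unset Printing Implicit Defensive.

(* Coordinates: a grid point (r, c) : 'I_N * 'I_(2N+1) stands for the vertex in
   row r+1 (rows numbered 1..N from top to bottom) with horizontal position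
   x = c - N (rows are centred at x = 0; row k has x in [-k, k]). *)
Definition validp (N : nat) (p : 'I_N * 'I_N.*2.+1) : bool :=
  (N <= p.2 + p.1.+1) && (p.2 <= N + p.1.+1).

Definition vtx (N : nat) := {p : 'I_N * 'I_N.*2.+1 | validp p}.

Section G.
Variable N : nat.
Implicit Types x y : vtx N.

Definition row x : nat := (val x).1.
Definition col x : nat := (val x).2.

(* adjacency in the square lattice Z^2 (induced subgraph) *)
Definition adj x y : bool :=
  ((row x == row y) && (((col x).+1 == col y) || ((col y).+1 == col x)))
  || ((col x == col y) && (((row x).+1 == row y) || ((row y).+1 == row x))).

(* colour classes: odd = colour of the leftmost vertex of each row *)
Definition oddV x : bool := ~~ odd (col x + (row x).+1 + N).
Definition evenV x : bool := odd (col x + (row x).+1 + N).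

(* boundary vertices, indices i : 'I_N stand for i+1 = 1..N *)
(* L_{i+1} : leftmost vertex of (1-based) row N - i *)
Definition isL (i : 'I_N) x : bool := (row x == N.-1 - i) && (col x + (row x).+1 == N).
(* R_{i+1} : rightmost vertex of (1-based) row i+1 *)
Definition isR (i : 'I_N) x : bool := (row x == i) && (col x == N + (row x).+1).
(* B_{i+1} : (i+1)-th even vertex of the bottom row, x-coordinate -N+2i+1 *)
Definition isB (i : 'I_N) x : bool := (row x == N.-1) && (col x == i.*2.+1).

Definition is_edge (e : {set vtx N}) : bool :=
  [exists x, exists y, adj x y && (e == [set x; y])].

Definition deg (f : {set {set vtx N}}) x : nat := #|[set e in f | x \in e]|.

Definition frel (f : {set {set vtx N}}) : rel (vtx N) := fun x y => [set x; y] \in f.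

Definition TFPL (f : {set {set vtx N}}) : Prop :=
  [/\ (forall e, e \in f -> is_edge e),
      (forall x, [exists i, isL i x || isR i x] -> deg f x <= 1),
      (forall i x, isB i x -> deg f x = 1),
      (forall x, ~~ [exists i, [|| isL i x, isR i x | isB i x]] -> deg f x = 2)
    & (forall i j x y, i != j ->
         ((isL i x && isL j y) || (isR i x && isR j y)) -> ~~ connect (frel f) x y)].

Definition under (A : {set vtx N * vtx N}) : {set {set vtx N}} :=
  [set [set a.1; a.2] | a in A].
Definition indeg (A : {set vtx N * vtx N}) x : nat := #|[set a in A | a.2 == x]|.
Definition outdeg (A : {set vtx N * vtx N}) x : nat := #|[set a in A | a.1 == x]|.

Definition oriented_TFPL (A : {set vtx N * vtx N}) : Prop :=
  [/\ (forall a, a \in A -> adj a.1 a.2),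
      (forall x y, (x, y) \in A -> (y, x) \notin A),
      TFPL (under A),
      (forall x, deg (under A) x = 2 -> indeg A x = 1 /\ outdeg A x = 1)
    & (forall i x, isL i x -> indeg A x = 0) /\
      (forall i x, isR i x -> outdeg A x = 0)].

Definition has_boundary (u v w : 'I_N -> bool) (A : {set vtx N * vtx N}) : Prop :=
  forall i x,
    [/\ isL i x -> (u i <-> deg (under A) x = 1),
        isR i x -> (~~ v i <-> deg (under A) x = 1),
        isB i x -> w i -> indeg A x = 1
      & isB i x -> ~~ w i -> outdeg A x = 1].

Definition Vo (u w : 'I_N -> bool) : {set vtx N} :=
  [set x | ~~ [exists i, isR i x] && ~~ [exists i, isB i x && ~~ w i]
           && ~~ [exists i, isL i x && ~~ u i]].
Definition Ve (v w : 'I_N -> bool) : {set vtx N} :=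
  [set x | ~~ [exists i, isL i x] && ~~ [exists i, isB i x && w i]
           && ~~ [exists i, isR i x && v i]].

Definition perfect_matching (S : {set vtx N}) (M : {set {set vtx N}}) : Prop :=
  (forall e, e \in M -> is_edge e /\ e \subset S) /\
  (forall x, x \in S -> #|[set e in M | x \in e]| = 1).

Definition Mo (A : {set vtx N * vtx N}) : {set {set vtx N}} :=
  [set [set a.1; a.2] | a in A & (oddV a.1 && evenV a.2)].
Definition Me (A : {set vtx N * vtx N}) : {set {set vtx N}} :=
  [set [set a.1; a.2] | a in A & (evenV a.1 && oddV a.2)].

End G.

From Pilot Require Import Defs.
From mathcomp Require Import all_boot zify.
Set Implicit Arguments. Unset Strict Implicit. Unset Printing Implicit Defensive.

(* In an oriented TFPL every vertex of degree 2 has one incoming and one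
   outgoing arc, and the boundary (u,v;w) prescribes the in- and out-degree,
   each 0 or 1, of every boundary vertex.  So the arcs leaving odd vertices
   cover each vertex of G_o(u,w) exactly once (an odd vertex by its out-arc,
   an even one by its in-arc) and no other vertex: they form a perfect
   matching M_o; dually the arcs leaving even vertices form M_e.  Conversely,
   orienting M_o from odd to even and M_e from even to odd gives exactly the
   prescribed degrees, and the one global TFPL condition comes for free: all
   in-degrees are at most 1 and the L_i are sources, so a simple path leaving
   a source must follow the orientation and cannot end at another source
   (dually for the sinks R_i). *)

Lemma set2_eq (T : finType) (p q r s : T) :
  [set p; q] = [set r; s] -> (p = r /\ q = s) \/ (p = s /\ q = r).
Proof.
move=> E.
have /set2P hp : p \in [set r; s] by rewrite -E set21.
have /set2P hq : q \in [set r; s] by rewrite -E set22.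
have /set2P hr : r \in [set p; q] by rewrite E set21.
have /set2P hs : s \in [set p; q] by rewrite E set22.
by case: hp hq hr hs => -> [] -> [] ? [] ?; subst; auto.
Qed.

Lemma card_imset_sep (aT rT : finType) (f : aT -> rT) (D : {set aT}) (P : pred rT) :
  {in D &, injective f} -> #|[set y in f @: D | P y]| = #|[set x in D | P (f x)]|.
Proof.
move=> f_inj; have -> : [set y in f @: D | P y] = f @: [set x in D | P (f x)].
  apply/setP => y; rewrite inE; apply/andP/imsetP => [[/imsetP[x Dx ->] Px]|[x]].
    by exists x; rewrite ?inE ?Dx.
  by rewrite inE => /andP[Dx Px] ->; rewrite imset_f.
by apply: card_in_imset; apply: sub_in2 f_inj => x; rewrite inE => /andP[].
Qed.

Section Grid.
Variable N : nat.
Implicit Types (x y : vtx N) (i j : 'I_N).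

Lemma adj_sym x y : adj x y -> adj y x.
Proof.
by rewrite /adj => /orP[] /andP[/eqP -> h]; apply/orP; [left|right];
  rewrite eqxx /= orbC.
Qed.

Lemma adj_neq x y : adj x y -> x != y.
Proof. by apply: contraL => /eqP ->; rewrite /adj; apply/negP; case/orP=> /andP[_]; lia. Qed.

Lemma oddV_adj x y : adj x y -> oddV y = ~~ oddV x.
Proof.
have oddS n m : n.+1 = m \/ m.+1 = n -> odd m = ~~ odd n.
  by case=> <- /=; rewrite ?negbK.
rewrite /oddV => /orP[] /andP[/eqP e /orP[] /eqP e'];
  rewrite (@oddS (col x + (row x).+1 + N)) //; lia.
Qed.

Lemma evenVE x : evenV x = ~~ oddV x.
Proof. by rewrite /evenV /oddV negbK. Qed.

Lemma isL_oddV i x : isL i x -> oddV x.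
Proof. by case/andP=> _ /eqP h; rewrite /oddV h addnn odd_double. Qed.

Lemma isR_oddV i x : isR i x -> oddV x.
Proof.
case/andP=> _ /eqP h; rewrite /oddV.
have -> : col x + (row x).+1 + N = (N + (row x).+1).*2 by lia.
by rewrite odd_double.
Qed.

Lemma isB_oddVF i x : isB i x -> oddV x = false.
Proof.
case/andP=> /eqP hr /eqP hc; rewrite /oddV hc hr.
have -> : i.*2.+1 + N.-1.+1 + N = (i + N).*2.+1 by move: (ltn_ord i); lia.
by rewrite /= odd_double.
Qed.

Lemma isL_isR i j x : isL i x -> isR j x = false.
Proof. by case/andP=> _ /eqP h; apply/negP => /andP[_ /eqP]; lia. Qed.

Lemma isL_isB i j x : isL i x -> isB j x = false.
Proof. by move=> /isL_oddV h; apply/negP => /isB_oddVF; rewrite h. Qed.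

Lemma isR_isB i j x : isR i x -> isB j x = false.
Proof. by move=> /isR_oddV h; apply/negP => /isB_oddVF; rewrite h. Qed.

Lemma isL_inj i j x : isL i x -> isL j x -> i = j.
Proof.
case/andP=> /eqP h _ /andP[/eqP h' _]; apply: ord_inj.
by move: (ltn_ord i) (ltn_ord j) h h'; lia.
Qed.

Lemma isR_inj i j x : isR i x -> isR j x -> i = j.
Proof. by case/andP=> /eqP h _ /andP[/eqP h' _]; apply: ord_inj; lia. Qed.

Lemma isB_inj i j x : isB i x -> isB j x -> i = j.
Proof. by case/andP=> _ /eqP h /andP[_ /eqP h']; apply: ord_inj; lia. Qed.

Lemma existsb_pred0 (P : pred 'I_N) : P =1 pred0 -> [exists j, P j] = false.
Proof. by move=> eP; apply/existsP => -[j]; rewrite eP. Qed.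

Lemma existsb_and_pred0 (P Q : pred 'I_N) :
  P =1 pred0 -> [exists j, P j && Q j] = false.
Proof. by move=> eP; apply/existsP => -[j]; rewrite eP. Qed.

Lemma existsb_pred1 (P : pred 'I_N) i : P =1 pred1 i -> [exists j, P j].
Proof. by move=> eP; apply/existsP; exists i; rewrite eP /=. Qed.

Lemma existsb_and_pred1 (P Q : pred 'I_N) i :
  P =1 pred1 i -> [exists j, P j && Q j] = Q i.
Proof.
move=> eP; apply/existsP/idP => [[j /andP[]] | q]; first by rewrite eP => /eqP ->.
by exists i; rewrite eP /= eqxx.
Qed.

Variant vertex_kind x : Type :=
  | KindL i of isL i x
  | KindR i of isR i x
  | KindB i of isB i x
  | KindInner of ~~ [exists i, [|| isL i x, isR i x | isB i x]].

Lemma vertex_kindP x : vertex_kind x.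
Proof.
case: (pickP (fun i : 'I_N => isL i x)) => [i Li|nL]; first exact: KindL Li.
case: (pickP (fun i : 'I_N => isR i x)) => [i Ri|nR]; first exact: KindR Ri.
case: (pickP (fun i : 'I_N => isB i x)) => [i Bi|nB]; first exact: KindB Bi.
by apply: KindInner; apply/existsPn => i; rewrite nL nR nB.
Qed.

Variables (u v w : 'I_N -> bool).

Lemma mem_VoVe_L i x : isL i x -> (x \in Vo u w) = u i /\ (x \in Ve v w) = false.
Proof.
move=> Li; have eL j : isL j x = (j == i) by apply/idP/eqP => [/isL_inj/(_ Li)|->].
have eR j : isR j x = false := isL_isR j Li.
have eB j : isB j x = false := isL_isB j Li.
rewrite !inE (existsb_pred0 eR) !(existsb_and_pred0 _ eB) (existsb_and_pred1 _ eL).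
by rewrite (existsb_pred1 eL) negbK.
Qed.

Lemma mem_VoVe_R i x : isR i x -> (x \in Vo u w) = false /\ (x \in Ve v w) = ~~ v i.
Proof.
move=> Ri; have eR j : isR j x = (j == i) by apply/idP/eqP => [/isR_inj/(_ Ri)|->].
have eL j : isL j x = false by apply/negbTE/negP => /(isL_isR i); rewrite Ri.
have eB j : isB j x = false := isR_isB j Ri.
rewrite !inE (existsb_pred1 eR) (existsb_pred0 eL) !(existsb_and_pred0 _ eB).
by rewrite (existsb_and_pred1 _ eR) (existsb_and_pred0 _ eL).
Qed.

Lemma mem_VoVe_B i x : isB i x -> (x \in Vo u w) = w i /\ (x \in Ve v w) = ~~ w i.
Proof.
move=> Bi; have eB j : isB j x = (j == i) by apply/idP/eqP => [/isB_inj/(_ Bi)|->].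
have eL j : isL j x = false by apply/negbTE/negP => /(isL_isB i); rewrite Bi.
have eR j : isR j x = false by apply/negbTE/negP => /(isR_isB i); rewrite Bi.
rewrite !inE (existsb_pred0 eL) (existsb_pred0 eR) !(existsb_and_pred0 _ eL).
by rewrite !(existsb_and_pred0 _ eR) !(existsb_and_pred1 _ eB) negbK !andbT.
Qed.

Lemma mem_VoVe_inner x : ~~ [exists i, [|| isL i x, isR i x | isB i x]] ->
  x \in Vo u w /\ x \in Ve v w.
Proof.
move=> /existsPn inner.
have eL j : isL j x = false by case/norP: (inner j) => /negbTE.
have eR j : isR j x = false by case/norP: (inner j) => _ /norP[/negbTE].
have eB j : isB j x = false by case/norP: (inner j) => _ /norP[_ /negbTE].
rewrite !inE (existsb_pred0 eL) (existsb_pred0 eR) !(existsb_and_pred0 _ eL).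
by rewrite !(existsb_and_pred0 _ eR) !(existsb_and_pred0 _ eB).
Qed.

End Grid.

Section Arcs.
Variable N : nat.
Implicit Types (x y : vtx N) (a : vtx N * vtx N) (b : bool).
Implicit Types (A : {set vtx N * vtx N}) (M : {set {set vtx N}}).

Definition edge_of a : {set vtx N} := [set a.1; a.2].

Definition arc_set A : Prop :=
  (forall a, a \in A -> adj a.1 a.2) /\ (forall x y, (x, y) \in A -> (y, x) \notin A).

Lemma oriented_TFPL_arc_set A : oriented_TFPL A -> arc_set A.
Proof. by case. Qed.

Lemma edge_of_is_edge a : adj a.1 a.2 -> is_edge (edge_of a).
Proof.
by move=> adj_a; apply/existsP; exists a.1; apply/existsP; exists a.2; rewrite adj_a eqxx.
Qed.

Lemma edge_of_inj A : arc_set A -> {in A &, injective edge_of}.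
Proof.
case=> _ A_anti [x y] [x' y'] xyA xyA'; rewrite /edge_of /=.
case/set2_eq => [[-> ->] // | [ex ey]].
by move: (A_anti _ _ xyA); rewrite ex ey xyA'.
Qed.

Lemma deg_under A x : arc_set A -> deg (under A) x = indeg A x + outdeg A x.
Proof.
move=> arcA; rewrite /deg card_imset_sep; last exact: edge_of_inj.
rewrite addnC -(cardsID [set a | a.1 == x]); congr (_ + _); apply: eq_card => a.
  by rewrite !inE; case: (a.1 =P x) => [<-|_]; rewrite ?eqxx ?andbT ?andbF.
rewrite !inE; case: (boolP (a \in A)) => [aA|]; last by rewrite andbF.
case: (a.1 =P x) => [<-|/eqP ne] /=; last by rewrite eq_sym (negbTE ne) eq_sym.
by rewrite eq_sym (negbTE (adj_neq (arcA.1 a aA))).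
Qed.

Definition arcs_leaving A b : {set vtx N * vtx N} := [set a in A | oddV a.1 == b].

Lemma leaving_endpointE a b x : oddV a.2 = ~~ oddV a.1 ->
  ((oddV a.1 == b) && ((x == a.1) || (x == a.2))) =
  (if oddV x == b then a.1 == x else a.2 == x).
Proof.
move=> par; have a12 : a.1 != a.2 by apply/eqP => e; move: par; rewrite e; case: oddV.
case: (x =P a.1) => [->|/eqP x1] /=.
  by rewrite eqxx andbT (eq_sym a.2) (negbTE a12); case: (_ == b).
case: (x =P a.2) => [->|/eqP x2]; last first.
  by rewrite andbF (eq_sym a.1) (eq_sym a.2) (negbTE x1) (negbTE x2); case: ifP.
by rewrite par eqxx (negbTE a12) andbT; case: b; case: oddV.
Qed.

Lemma deg_arcs_leaving A b x : arc_set A ->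
  deg (edge_of @: arcs_leaving A b) x = if oddV x == b then outdeg A x else indeg A x.
Proof.
move=> arcA; rewrite /deg card_imset_sep; last first.
  by apply: sub_in2 (edge_of_inj arcA) => a; rewrite inE => /andP[].
rewrite /outdeg /indeg; case: ifP => xb; apply: eq_card => a; rewrite !inE -andbA.
all: case: (boolP (a \in A)) => //= aA.
all: by rewrite leaving_endpointE ?xb // (oddV_adj (arcA.1 a aA)).
Qed.

Lemma Mo_Me_arcs_leaving A b : (forall a, a \in A -> adj a.1 a.2) ->
  (if b then Mo A else Me A) = edge_of @: arcs_leaving A b.
Proof.
move=> adjA; apply/setP => e; case: b; apply/imsetP/imsetP => -[a].
all: rewrite inE; case: (boolP (a \in A)) => //= aA cond ->; exists a => //.
all: by move: cond; rewrite !inE aA ?evenVE (oddV_adj (adjA a aA)); case: oddV.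
Qed.

Definition arcs_of (M1 M2 : {set {set vtx N}}) : {set vtx N * vtx N} :=
  [set a | adj a.1 a.2 && (edge_of a \in if oddV a.1 then M1 else M2)].

Lemma arcs_of_Mo_Me A : arc_set A -> arcs_of (Mo A) (Me A) = A.
Proof.
move=> arcA; apply/setP => a; rewrite inE Mo_Me_arcs_leaving; last exact: arcA.1.
case: (boolP (adj a.1 a.2)) => /= [adj_a|nadj]; last first.
  by apply/esym/negP => /(arcA.1 a); apply/negP.
apply/imsetP/idP => [[a']|aA]; last by exists a; rewrite // inE aA eqxx.
rewrite inE => /andP[a'A /eqP col] /set2_eq[[e1 e2]|[e1 e2]].
  by rewrite [a]surjective_pairing e1 e2 -surjective_pairing.
by move: col; rewrite -e2 (oddV_adj adj_a); case: oddV.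
Qed.

Lemma arcs_of_arc_set (M1 M2 : {set {set vtx N}}) :
  [disjoint M1 & M2] -> arc_set (arcs_of M1 M2).
Proof.
move=> M12; split=> [a|x y]; first by rewrite inE => /andP[].
rewrite !inE /= => /andP[adj_xy xyM]; apply/negP => /andP[_].
rewrite /edge_of /= setUC (oddV_adj adj_xy) -/(edge_of (x, y)).
by case: oddV xyM => /= xyM; rewrite ?(disjointFr M12 xyM) ?(disjointFl M12 xyM).
Qed.

Lemma arcs_leaving_arcs_of (M1 M2 : {set {set vtx N}}) b :
  (forall e, e \in (if b then M1 else M2) -> is_edge e) ->
  edge_of @: arcs_leaving (arcs_of M1 M2) b = if b then M1 else M2.
Proof.
move=> edgeM; apply/setP => e; apply/imsetP/idP => [[a]|eM].
  by rewrite !inE => /andP[/andP[_ aM] /eqP <-] ->.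
have /existsP[x /existsP[y /andP[adj_xy /eqP exy]]] := edgeM e eM.
have par := oddV_adj adj_xy.
case xb: (oddV x == b).
  by exists (x, y); rewrite // !inE /= adj_xy xb andbT (eqP xb) /edge_of /= -exy.
have yb : oddV y = b by rewrite par; case: b xb {edgeM eM}; case: oddV.
exists (y, x); last by rewrite exy /edge_of setUC.
by rewrite !inE /= adj_sym // yb eqxx andbT /edge_of /= setUC -exy.
Qed.

Lemma deg_Mo A x : arc_set A -> deg (Mo A) x = if oddV x then outdeg A x else indeg A x.
Proof.
move=> arcA; have /= -> := Mo_Me_arcs_leaving true arcA.1.
by rewrite deg_arcs_leaving // eqb_id.
Qed.

Lemma deg_Me A x : arc_set A -> deg (Me A) x = if oddV x then indeg A x else outdeg A x.
Proof.
move=> arcA; have /= -> := Mo_Me_arcs_leaving false arcA.1.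
by rewrite deg_arcs_leaving // eqbF_neg if_neg.
Qed.

Lemma Mo_Me_is_edge A b : (forall a, a \in A -> adj a.1 a.2) ->
  forall e, e \in (if b then Mo A else Me A) -> is_edge e.
Proof.
move=> adjA e; rewrite Mo_Me_arcs_leaving // => /imsetP[a].
by rewrite inE => /andP[/adjA adj_a _] ->; apply: edge_of_is_edge.
Qed.

Lemma Mo_Me_disjoint A : arc_set A -> [disjoint Mo A & Me A].
Proof.
move=> arcA; have /= -> := Mo_Me_arcs_leaving true arcA.1.
have /= -> := Mo_Me_arcs_leaving false arcA.1.
apply/pred0P => e /=; apply/negP => /andP[/imsetP[a + ->] /imsetP[b]]; rewrite !inE.
move=> /andP[aA /eqP a1] /andP[bA /eqP b1] /(edge_of_inj arcA aA bA) ab.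
by move: a1; rewrite ab b1.
Qed.

Lemma Mo_arcs_of (M1 M2 : {set {set vtx N}}) : [disjoint M1 & M2] ->
  (forall e, e \in M1 -> is_edge e) -> Mo (arcs_of M1 M2) = M1.
Proof.
move=> M12 edgeM1; have /= -> := Mo_Me_arcs_leaving true (arcs_of_arc_set M12).1.
exact: (@arcs_leaving_arcs_of M1 M2 true edgeM1).
Qed.

Lemma Me_arcs_of (M1 M2 : {set {set vtx N}}) : [disjoint M1 & M2] ->
  (forall e, e \in M2 -> is_edge e) -> Me (arcs_of M1 M2) = M2.
Proof.
move=> M12 edgeM2; have /= -> := Mo_Me_arcs_leaving false (arcs_of_arc_set M12).1.
exact: (@arcs_leaving_arcs_of M1 M2 false edgeM2).
Qed.

Lemma perfect_matchingP (S : {set vtx N}) M : perfect_matching S M <->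
  (forall e, e \in M -> is_edge e) /\ (forall x, deg M x = (x \in S)).
Proof.
split=> -[edgeM degM]; split=> [e eM|x].
- exact: (edgeM e eM).1.
- case: (boolP (x \in S)) => xS; first exact: degM.
  apply/eqP; rewrite cards_eq0; apply/eqP/setP => e; rewrite !inE.
  apply/negbTE/andP => -[eM xe]; move: xS.
  by rewrite (subsetP (edgeM e eM).2 x xe).
- split; first exact: edgeM.
  apply/subsetP => y ye; have : 0 < deg M y by apply/card_gt0P; exists e; rewrite inE eM.
  by rewrite degM lt0b.
- by move=> xS; rewrite -/(deg M x) degM xS.
Qed.

Lemma frel_under A x y : Defs.frel (under A) x y -> (x, y) \in A \/ (y, x) \in A.
Proof.
by case/imsetP => a aA /set2_eq[[-> ->]|[-> ->]]; rewrite -surjective_pairing; auto.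
Qed.

Lemma indeg_gt0 A x y : (x, y) \in A -> 0 < indeg A y.
Proof. by move=> xyA; apply/card_gt0P; exists (x, y); rewrite inE xyA /=. Qed.

Lemma indeg_gt1 A x x' y : (x, y) \in A -> (x', y) \in A -> x != x' -> 1 < indeg A y.
Proof.
move=> xyA x'yA xx'; apply/card_gt1P; exists (x, y), (x', y).
by rewrite !inE xyA x'yA /= xpair_eqE eqxx andbT.
Qed.

(* Along a simple path that enters its first vertex through an arc, in-degrees
   at most 1 force every edge to be traversed forwards. *)
Lemma simple_path_indeg_last A x y p : (forall z, indeg A z <= 1) ->
  (x, y) \in A -> x \notin y :: p -> uniq (y :: p) -> path (Defs.frel (under A)) y p ->
  0 < indeg A (last y p).
Proof.
move=> indeg_le1; elim: p x y => [|z p IHp] x y xyA /= xp yp.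
  by move=> _; apply: indeg_gt0 xyA.
case/andP=> /frel_under[yzA|zyA] zp; first by apply: (IHp y); case/andP: yp.
have xz : x != z by move: xp; rewrite !inE negb_or => /andP[_]; rewrite negb_or => /andP[].
by have := indeg_gt1 xyA zyA xz; rewrite ltnNge indeg_le1.
Qed.

Lemma sources_not_connected A x y : (forall z, indeg A z <= 1) -> x != y ->
  indeg A x = 0 -> indeg A y = 0 -> ~~ connect (Defs.frel (under A)) x y.
Proof.
move=> indeg_le1 xy x0 y0; apply/negP => /connectP[p xp ey].
move: xy y0; rewrite {}ey; case/shortenP: xp => [[|z q]] /=; first by rewrite eqxx.
case/andP => /frel_under[xzA|zxA] zq /andP[xzq uq] _ _ y0.
  by have := simple_path_indeg_last indeg_le1 xzA xzq uq zq; rewrite y0.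
by have := indeg_gt0 zxA; rewrite x0.
Qed.

Definition rev_arcs A : {set vtx N * vtx N} := [set (a.2, a.1) | a in A].

Lemma under_rev_arcs A : under (rev_arcs A) = under A.
Proof.
apply/setP => e; apply/imsetP/imsetP => [[_ /imsetP[a aA ->] ->]|[a aA ->]].
  by exists a; rewrite //= setUC.
by exists (a.2, a.1); rewrite ?imset_f //= setUC.
Qed.

Lemma indeg_rev_arcs A x : indeg (rev_arcs A) x = outdeg A x.
Proof.
rewrite /indeg card_imset_sep; last by move=> [? ?] [? ?] _ _ [-> ->].
by apply: eq_card => a; rewrite !inE.
Qed.

Lemma sinks_not_connected A x y : (forall z, outdeg A z <= 1) -> x != y ->
  outdeg A x = 0 -> outdeg A y = 0 -> ~~ connect (Defs.frel (under A)) x y.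
Proof.
rewrite -under_rev_arcs -!indeg_rev_arcs => outdeg_le1; apply: sources_not_connected.
by move=> z; rewrite indeg_rev_arcs.
Qed.

End Arcs.

Lemma eq_bool_of_le1 n (b : bool) : n <= 1 -> (b <-> n = 1) -> n = b.
Proof.
move=> le1; case: b => -[h1 h2]; first exact: h1 isT.
by case: n le1 h1 h2 => [|[|]] // _ _ /(_ erefl).
Qed.

Section Boundary.
Variables (N : nat) (u v w : 'I_N -> bool).
Implicit Types (x : vtx N) (A : {set vtx N * vtx N}).

Definition expected_degrees A x : Prop :=
  outdeg A x = (if oddV x then x \in Vo u w else x \in Ve v w) /\
  indeg A x = (if oddV x then x \in Ve v w else x \in Vo u w).

Lemma expected_degrees_L A i x : isL i x ->
  expected_degrees A x <-> indeg A x = 0 /\ outdeg A x = u i.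
Proof.
move=> Li; rewrite /expected_degrees (isL_oddV Li).
by have [-> ->] := mem_VoVe_L u v w Li; split=> -[-> ->].
Qed.

Lemma expected_degrees_R A i x : isR i x ->
  expected_degrees A x <-> indeg A x = ~~ v i /\ outdeg A x = 0.
Proof.
move=> Ri; rewrite /expected_degrees (isR_oddV Ri).
by have [-> ->] := mem_VoVe_R u v w Ri; split=> -[-> ->].
Qed.

Lemma expected_degrees_B A i x : isB i x ->
  expected_degrees A x <-> indeg A x = w i /\ outdeg A x = ~~ w i.
Proof.
move=> Bi; rewrite /expected_degrees (isB_oddVF Bi).
by have [-> ->] := mem_VoVe_B u v w Bi; split=> -[-> ->].
Qed.

Lemma expected_degrees_inner A x : ~~ [exists i, [|| isL i x, isR i x | isB i x]] ->
  expected_degrees A x <-> indeg A x = 1 /\ outdeg A x = 1.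
Proof.
move=> inner; rewrite /expected_degrees.
by have [-> ->] := mem_VoVe_inner u v w inner; case: oddV; split=> -[-> ->].
Qed.

Lemma oriented_TFPL_expected_degrees A :
  oriented_TFPL A -> has_boundary u v w A -> forall x, expected_degrees A x.
Proof.
move=> oA bA x; have [_ _ [_ LR_le1 B_deg1 inner_deg2 _] deg2_io [L_in0 R_out0]] := oA.
have degx := deg_under x (oriented_TFPL_arc_set oA).
case: (vertex_kindP x) => [i Li|i Ri|i Bi|inner].
- apply/(expected_degrees_L _ Li); have in0 := L_in0 i x Li; split=> //.
  have [/(_ Li) ui _ _ _] := bA i x.
  have le1 : deg (under A) x <= 1 by apply: LR_le1; apply/existsP; exists i; rewrite Li.
  by rewrite degx in0 in ui le1; apply: eq_bool_of_le1.
- apply/(expected_degrees_R _ Ri); have out0 := R_out0 i x Ri; split=> //.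
  have [_ /(_ Ri) vi _ _] := bA i x.
  have le1 : deg (under A) x <= 1 by apply: LR_le1; apply/existsP; exists i; rewrite Ri orbT.
  by rewrite degx out0 addn0 in vi le1; apply: eq_bool_of_le1.
- apply/(expected_degrees_B _ Bi); have [_ _ /(_ Bi) wi1 /(_ Bi) wi0] := bA i x.
  have := B_deg1 i x Bi; rewrite degx.
  case: (w i) wi1 wi0 => [/(_ isT) -> _ | _ /(_ isT) ->].
    by rewrite add1n => -[->].
  by rewrite addn1 => -[->].
- by apply/(expected_degrees_inner _ inner); apply: deg2_io; apply: inner_deg2.
Qed.

Section FromDegrees.
Variable A : {set vtx N * vtx N}.
Hypotheses (arcA : arc_set A) (degA : forall x, expected_degrees A x).

Let degx x : deg (under A) x = indeg A x + outdeg A x := deg_under x arcA.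
Let degL i x (Li : isL i x) := (expected_degrees_L A Li).1 (degA x).
Let degR i x (Ri : isR i x) := (expected_degrees_R A Ri).1 (degA x).
Let degB i x (Bi : isB i x) := (expected_degrees_B A Bi).1 (degA x).

Lemma expected_indeg_le1 x : indeg A x <= 1.
Proof. by case: (degA x) => _ ->; apply: leq_b1. Qed.

Lemma expected_outdeg_le1 x : outdeg A x <= 1.
Proof. by case: (degA x) => -> _; apply: leq_b1. Qed.

Lemma expected_degrees_TFPL : TFPL (under A).
Proof.
split.
- by move=> e /imsetP[a aA ->]; apply/edge_of_is_edge/arcA.1.
- move=> x /existsP[i /orP[Li|Ri]]; rewrite degx.
    by have [-> ->] := degL Li; apply: leq_b1.
  by have [-> ->] := degR Ri; rewrite addn0 leq_b1.
- by move=> i x Bi; rewrite degx; have [-> ->] := degB Bi; case: (w i).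
- by move=> x inner; rewrite degx; have [-> ->] := (expected_degrees_inner A inner).1 (degA x).
move=> i j x y ij /orP[/andP[Li Lj]|/andP[Ri Rj]].
  apply: sources_not_connected (degL Li).1 (degL Lj).1; first exact: expected_indeg_le1.
  by apply: contraNneq ij => exy; rewrite exy in Li; rewrite (isL_inj Li Lj).
apply: sinks_not_connected (degR Ri).2 (degR Rj).2; first exact: expected_outdeg_le1.
by apply: contraNneq ij => exy; rewrite exy in Ri; rewrite (isR_inj Ri Rj).
Qed.

Lemma expected_degrees_oriented_TFPL : oriented_TFPL A /\ has_boundary u v w A.
Proof.
have [adjA antiA] := arcA.
split; first split=> //.
- exact: expected_degrees_TFPL.
- move=> x; rewrite degx => deg2.
  by have := expected_indeg_le1 x; have := expected_outdeg_le1 x; lia.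
- by split=> i x; [case/degL | case/degR].
move=> i x; split.
- by move=> Li; rewrite degx; have [-> ->] := degL Li; case: (u i).
- by move=> Ri; rewrite degx; have [-> ->] := degR Ri; case: (v i).
- by move=> Bi wi; have [-> _] := degB Bi; rewrite wi.
by move=> Bi wi; have [_ ->] := degB Bi; rewrite (negbTE wi).
Qed.

End FromDegrees.

Lemma expected_degrees_Mo_Me A : arc_set A ->
  (forall x, expected_degrees A x) <->
  (forall x, deg (Mo A) x = (x \in Vo u w) /\ deg (Me A) x = (x \in Ve v w)).
Proof.
move=> arcA; split=> degA x; move: (degA x).
  by rewrite /expected_degrees (deg_Mo x arcA) (deg_Me x arcA); case: oddV => -[-> ->].
by rewrite /expected_degrees (deg_Mo x arcA) (deg_Me x arcA); case: oddV => -[<- <-].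
Qed.

Lemma oriented_TFPL_perfect_matchings A : oriented_TFPL A -> has_boundary u v w A ->
  perfect_matching (Vo u w) (Mo A) /\ perfect_matching (Ve v w) (Me A).
Proof.
move=> oA bA; have arcA := oriented_TFPL_arc_set oA.
have /(expected_degrees_Mo_Me arcA) degA := oriented_TFPL_expected_degrees oA bA.
split; apply/perfect_matchingP; split; try by move=> x; case: (degA x).
  exact: (Mo_Me_is_edge (b := true) arcA.1).
exact: (Mo_Me_is_edge (b := false) arcA.1).
Qed.

Lemma perfect_matchings_oriented_TFPL A : arc_set A ->
  perfect_matching (Vo u w) (Mo A) -> perfect_matching (Ve v w) (Me A) ->
  oriented_TFPL A /\ has_boundary u v w A.
Proof.
move=> arcA /perfect_matchingP[_ degMo] /perfect_matchingP[_ degMe].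
by apply: expected_degrees_oriented_TFPL => //; apply/expected_degrees_Mo_Me.
Qed.

End Boundary.

Theorem theorem3p3 (N : nat) (hN : 0 < N) (u v w : 'I_N -> bool) :
  (forall A : {set vtx N * vtx N}, oriented_TFPL A -> has_boundary u v w A ->
     [/\ perfect_matching (Vo u w) (Mo A), perfect_matching (Ve v w) (Me A)
       & [disjoint Mo A & Me A]]) /\
  (forall A1 A2 : {set vtx N * vtx N},
     oriented_TFPL A1 -> has_boundary u v w A1 ->
     oriented_TFPL A2 -> has_boundary u v w A2 ->
     (Mo A1, Me A1) = (Mo A2, Me A2) -> A1 = A2) /\
  (forall Mo' Me' : {set {set vtx N}},
     perfect_matching (Vo u w) Mo' -> perfect_matching (Ve v w) Me' ->
     [disjoint Mo' & Me'] ->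
     exists A : {set vtx N * vtx N},
       [/\ oriented_TFPL A, has_boundary u v w A & (Mo A, Me A) = (Mo', Me')]).
Proof.
split; [|split].
- move=> A oA bA; have [pmMo pmMe] := oriented_TFPL_perfect_matchings oA bA.
  by split=> //; apply/Mo_Me_disjoint/oriented_TFPL_arc_set.
- move=> A1 A2 /oriented_TFPL_arc_set arcA1 _ /oriented_TFPL_arc_set arcA2 _ [eMo eMe].
  by rewrite -(arcs_of_Mo_Me arcA1) -(arcs_of_Mo_Me arcA2) eMo eMe.
move=> Mo' Me' pmMo pmMe disjM; exists (arcs_of Mo' Me').
have eMo : Mo (arcs_of Mo' Me') = Mo' by apply: Mo_arcs_of => // e /pmMo.1[].
have eMe : Me (arcs_of Mo' Me') = Me' by apply: Me_arcs_of => // e /pmMe.1[].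
have [oA bA] : oriented_TFPL (arcs_of Mo' Me') /\ has_boundary u v w (arcs_of Mo' Me').
  by apply: perfect_matchings_oriented_TFPL; rewrite ?eMo ?eMe //; apply: arcs_of_arc_set.
by rewrite eMo eMe.
Qed.
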